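(* Let $A$ be an algebra of Jordan type half over a field $\mathbb{F}$ of characteristic zero. If $a,b\in A$ are primitive axes of Jordan type half with $(a,b)=0$, then every non-zero, non-identity idempotent of $J=\langle\langle a,b\rangle\rangle$ is a primitive axis of Jordan type half in $A$; that is, $J$ is solid.
   Context: All algebras are commutative, not necessarily associative; $A_\lambda(x)=\{u\in A:xu=\lambda u\}$. A primitive axis of Jordan type half is $x\neq0$ with $x^2=x$, $A=A_1(x)\oplus A_0(x)\oplus A_{1/2}(x)$, $A_1(x)=\mathbb{F}x$, and fusion rules $A_1A_1\subseteq A_1$, $A_1A_0=0$, $A_0A_0\subseteq A_0$, $A_1A_{1/2},A_0A_{1/2}\subseteq A_{1/2}$, $A_{1/2}A_{1/2}\subseteq A_1\oplus A_0$. An algebra of Jordan type half is a commutative algebra generated by such axes; it has a unique Frobenius form $(\cdot,\cdot)$ (bilinear, $(uv,w)=(u,vw)$, $(x,x)=1$ for primitive axes $x$). $J=\langle\langle a,b\rangle\rangle$ is solid if every idempotent $c\in J$ with $c\neq0$, $c\neq1_J$ (the identity of $J$) is a primitive axis of Jordan type half in $A$. *)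

From mathcomp Require Import all_boot all_algebra.
Set Implicit Arguments. Unset Strict Implicit. Unset Printing Implicit Defensive.
Import GRing.Theory.
Local Open Scope ring_scope.

(* A commutative, not necessarily associative, algebra over F is encoded by
   an F-vector space V (lmodType F) together with a product mul : V -> V -> V
   which is bilinear and commutative. *)
Section JordanTypeHalf.
Variables (F : fieldType) (V : lmodType F) (mul : V -> V -> V).

Definition comm_algebra : Prop :=
  (forall u v, mul u v = mul v u) /\
  (forall (c : F) u v w, mul (c *: u + v) w = c *: mul u w + mul v w).

Definition eigsp (x : V) (l : F) (u : V) : Prop := mul x u = l *: u.

Definition half : F := (2%:R)^-1.

Definition fusion_half (x : V) : Prop :=
  forall u v,
    (eigsp x 1 u -> eigsp x 1 v -> eigsp x 1 (mul u v)) /\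
    (eigsp x 1 u -> eigsp x 0 v -> mul u v = 0) /\
    (eigsp x 0 u -> eigsp x 0 v -> eigsp x 0 (mul u v)) /\
    (eigsp x 1 u -> eigsp x half v -> eigsp x half (mul u v)) /\
    (eigsp x 0 u -> eigsp x half v -> eigsp x half (mul u v)) /\
    (eigsp x half u -> eigsp x half v ->
       exists w1 w0, [/\ eigsp x 1 w1, eigsp x 0 w0 & mul u v = w1 + w0]).

Definition primitive_axis (x : V) : Prop :=
  [/\ x != 0, mul x x = x,
      (* A = A_1(x) + A_0(x) + A_{1/2}(x) (the sum of eigenspaces is direct) *)
      (forall u, exists u1 u0 uh,
          [/\ eigsp x 1 u1, eigsp x 0 u0, eigsp x half uh & u = u1 + u0 + uh]),
      (forall u, eigsp x 1 u <-> exists c : F, u = c *: x)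
    & fusion_half x].

Definition subalgebra (S : V -> Prop) : Prop :=
  [/\ S 0,
      (forall (c : F) u v, S u -> S v -> S (c *: u + v))
    & (forall u v, S u -> S v -> S (mul u v))].

Definition generated (X : V -> Prop) (u : V) : Prop :=
  forall S, subalgebra S -> (forall x, X x -> S x) -> S u.

Definition jordan_type_half_algebra : Prop :=
  comm_algebra /\ (forall u, generated primitive_axis u).

Definition frobenius_form (f : V -> V -> F) : Prop :=
  [/\ (forall (c : F) u v w, f (c *: u + v) w = c * f u w + f v w),
      (forall (c : F) u v w, f u (c *: v + w) = c * f u v + f u w),
      (forall u v w, f (mul u v) w = f u (mul v w))
    & (forall x, primitive_axis x -> f x x = 1)].

Definition gen2 (a b : V) : V -> Prop := generated (fun x => x = a \/ x = b).

Definition is_identity_of (J : V -> Prop) (e : V) : Prop :=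
  J e /\ (forall u, J u -> mul e u = u).

Definition solid (a b : V) : Prop :=
  forall c, gen2 a b c -> mul c c = c -> c != 0 ->
    ~ is_identity_of (gen2 a b) c -> primitive_axis c.

End JordanTypeHalf.

From HB Require Import structures.
From Pilot Require Import Defs.
From mathcomp Require Import all_boot all_algebra.
From mathcomp Require Import ring.
Set Implicit Arguments. Unset Strict Implicit. Unset Printing Implicit Defensive.
Import GRing.Theory.
Local Open Scope ring_scope.

(* Put n := 2ab.  Since (a, b) = 0, the Frobenius form kills the A_1(a)
   component of b, so b - n lies in A_0(a) and n in A_1/2(a); symmetrically
   a - n lies in A_0(b) and n in A_1/2(b), and the fusion rules force n n = 0.
   Hence J lies in the span of a, b - n and n, whose multiplication table
   shows that its idempotents other than 0 and 1_J = a + (b - n) are the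
   points a + t n and b + t n of two lines.  The product of the Miyamoto involutions of a and
   b is an automorphism translating a + t n to a + (t + 2) n, so a + 2k n is a
   primitive axis for every natural k.  For an idempotent c on the line, being
   a primitive axis amounts to the vanishing of finitely many vectors that are
   polynomial in t (the spectral projections of L_c are polynomials in L_c,
   and A_1(c) = F c reads P_1(u) = (c, u) c); in characteristic 0 they vanish
   at infinitely many t, hence identically. *)

Section LinearCombination.
Variables (R : pzRingType) (V : lmodType R).

Definition lcomb (vs : seq V) (r : nat -> R) := \sum_(i < size vs) r i *: vs`_i.

Lemma lcomb_atom vs k v : vs`_k = v -> v = lcomb vs (fun i => (i == k)%:R).
Proof.
move=> <-; rewrite /lcomb; have [lt_k|le_k] := ltnP k (size vs).
  rewrite (bigD1 (Ordinal lt_k)) //= eqxx scale1r big1 ?addr0 // => i ne_ik.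
  by rewrite (_ : (i == k :> nat) = false) ?scale0r //; apply/negbTE.
rewrite nth_default // big1 // => i _.
by rewrite ltn_eqF ?scale0r // (leq_trans (ltn_ord i) le_k).
Qed.

Lemma lcomb0 vs : 0 = lcomb vs (fun=> 0).
Proof. by rewrite /lcomb big1 // => i _; rewrite scale0r. Qed.

Lemma lcombD vs r s : lcomb vs r + lcomb vs s = lcomb vs (fun i => r i + s i).
Proof. by rewrite /lcomb -big_split; apply: eq_bigr => i _; rewrite scalerDl. Qed.

Lemma lcombN vs r : - lcomb vs r = lcomb vs (fun i => - r i).
Proof. by rewrite /lcomb -sumrN; apply: eq_bigr => i _; rewrite scaleNr. Qed.

Lemma lcombZ vs c r : c *: lcomb vs r = lcomb vs (fun i => c * r i).
Proof. by rewrite /lcomb scaler_sumr; apply: eq_bigr => i _; rewrite scalerA. Qed.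

Lemma eq_lcomb vs r s :
  (forall i, (i < size vs)%N -> r i = s i) -> lcomb vs r = lcomb vs s.
Proof. by move=> rs; apply: eq_bigr => i _; rewrite rs. Qed.

End LinearCombination.

(* [lincomb [:: v0; ...; vk] by close] proves an identity between linear
   combinations of the atoms [vi] by comparing coefficients, each coefficient
   identity being closed by [close] (default [ring]); compound atoms must be
   listed before their subterms. *)
Ltac lincomb_coefs close :=
  let i := fresh "i" in
  first [ by move=> i /=
        | case=> [|i]; [move=> _; cbn; close | revert i; lincomb_coefs close] ].

Ltac lincomb_with atoms close :=
  let vs := fresh "vs" in
  pose vs := atoms;
  let rec expand k l := lazymatch l with
    | (?v :: ?l')%SEQ =>
        try rewrite [v](@lcomb_atom _ _ vs k v erefl); expand k.+1 l'
    | _ => idtac end in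
  expand 0%N atoms;
  rewrite ?(lcomb0 vs); rewrite ?(lcombZ, lcombN, lcombD);
  apply: eq_lcomb; rewrite /vs /=; lincomb_coefs close.

Tactic Notation "lincomb" constr(atoms) "by" tactic(close) :=
  lincomb_with atoms ltac:(close).
Tactic Notation "lincomb" constr(atoms) := lincomb_with atoms ltac:(ring).

Section PolynomialMap.
Variable F : fieldType.

Definition polynomial_map (U : lmodType F) (g : F -> U) :=
  exists s : seq (nat * U), forall t, g t = \sum_(p <- s) t ^+ p.1 *: p.2.

Lemma polynomial_map_const (U : lmodType F) (v : U) : polynomial_map (fun=> v).
Proof. by exists [:: (0%N, v)] => t; rewrite big_seq1 expr0 scale1r. Qed.

Lemma polynomial_mapX (U : lmodType F) (g : F -> U) :
  polynomial_map g -> polynomial_map (fun t => t *: g t).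
Proof.
case=> s gE; exists [seq (p.1.+1, p.2) | p <- s] => t.
by rewrite big_map gE scaler_sumr; apply: eq_bigr => p _; rewrite scalerA exprS.
Qed.

Lemma polynomial_mapD (U : lmodType F) (g1 g2 : F -> U) :
  polynomial_map g1 -> polynomial_map g2 -> polynomial_map (fun t => g1 t + g2 t).
Proof. by case=> s1 g1E [s2 g2E]; exists (s1 ++ s2) => t; rewrite big_cat g1E g2E. Qed.

Lemma polynomial_mapZ (U : lmodType F) c (g : F -> U) :
  polynomial_map g -> polynomial_map (fun t => c *: g t).
Proof.
case=> s gE; exists [seq (p.1, c *: p.2) | p <- s] => t.
by rewrite big_map gE scaler_sumr; apply: eq_bigr => p _; rewrite !scalerA mulrC.
Qed.

Lemma polynomial_mapN (U : lmodType F) (g : F -> U) :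
  polynomial_map g -> polynomial_map (fun t => - g t).
Proof.
by move=> /(polynomial_mapZ (-1))[s gE]; exists s => t; rewrite -gE scaleN1r.
Qed.

Lemma polynomial_map_bilinear (U1 U2 W : lmodType F)
    (B : {bilinear U1 -> U2 -> W}) (g1 : F -> U1) (g2 : F -> U2) :
  polynomial_map g1 -> polynomial_map g2 -> polynomial_map (fun t => B (g1 t) (g2 t)).
Proof.
case=> s1 g1E [s2 g2E].
exists [seq (pq.1.1 + pq.2.1, B pq.1.2 pq.2.2)%N
        | pq <- [seq (p, q) | p <- s1, q <- s2]].
move=> t; rewrite big_map big_allpairs g1E linear_sumlz; apply: eq_bigr => p _.
rewrite g2E linear_sumr; apply: eq_bigr => q _ /=.
by rewrite linearZl_LR linearZr_LR scalerA exprD.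
Qed.

Lemma polynomial_map_coefs (U : lmodType F) (g : F -> U) : polynomial_map g ->
  exists d (c : 'I_d -> U), forall t, g t = \sum_(i < d) t ^+ i *: c i.
Proof.
case=> s gE; pose d := (\max_(p <- s) p.1).+1.
have lt_d p : p \in s -> (p.1 < d)%N by move=> sp; rewrite ltnS (leq_bigmax_seq p).
exists d, (fun i : 'I_d => \sum_(p <- s | p.1 == i) p.2) => t; rewrite gE.
under [RHS]eq_bigr => i _ do rewrite scaler_sumr big_mkcond.
rewrite exchange_big /= [LHS]big_seq_cond [RHS]big_seq_cond.
apply: eq_bigr => p /andP[sp _].
by rewrite -big_mkcond /= (big_pred1 (Ordinal (lt_d p sp))).
Qed.

Lemma vandermonde_eq0 (U : lmodType F) d (c : 'I_d -> U) (pt : nat -> F) :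
  injective pt -> (forall k : 'I_d, \sum_(i < d) pt k ^+ i *: c i = 0) ->
  forall i, c i = 0.
Proof.
move=> pt_inj vanish j.
pose M : 'M[F]_d := Vandermonde d (\row_(k < d) pt k).
have M_unit : M \in unitmx.
  rewrite unitmxE det_Vandermonde unitfE; apply/prodf_neq0 => i _.
  apply/prodf_neq0 => k lt_ik; rewrite !mxE subr_eq0.
  by apply: contraTneq lt_ik => /pt_inj/val_inj ->; rewrite ltnn.
have -> : c j = \sum_i (M *m invmx M) i j *: c i.
  rewrite mulmxV // (bigD1 j) //= mxE eqxx scale1r big1 ?addr0 // => i ne_ij.
  by rewrite mxE (negbTE ne_ij) scale0r.
under eq_bigr => i _ do rewrite mxE scaler_suml.
rewrite exchange_big big1 // => k _.
transitivity (invmx M k j *: \sum_(i < d) pt k ^+ i *: c i).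
  by rewrite scaler_sumr; apply: eq_bigr => i _; rewrite !mxE scalerA mulrC.
by rewrite vanish scaler0.
Qed.

Lemma polynomial_map_eq0 (U : lmodType F) (g : F -> U) (pt : nat -> F) :
  injective pt -> polynomial_map g -> (forall k, g (pt k) = 0) -> forall t, g t = 0.
Proof.
move=> pt_inj /polynomial_map_coefs[d [c gE]] vanish t.
have c0 : forall i, c i = 0 by apply: (vandermonde_eq0 pt_inj) => k; rewrite -gE.
by rewrite gE big1 // => i _; rewrite c0 scaler0.
Qed.

Lemma eq_polynomial_map (U : lmodType F) (g1 g2 : F -> U) :
  g1 =1 g2 -> polynomial_map g1 -> polynomial_map g2.
Proof. by move=> g12 [s gE]; exists s => t; rewrite -g12. Qed.

End PolynomialMap.

Ltac polynomial_step :=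
  first [ assumption | apply: polynomial_map_const | apply: polynomial_mapX
        | apply: polynomial_mapZ | apply: polynomial_mapD
        | apply: polynomial_mapN | apply: polynomial_map_bilinear ].

Section JordanTypeHalf.
Variables (F : fieldType) (V : lmodType F) (mul : V -> V -> V).
Hypothesis charF : [pchar F] =i pred0.
Hypothesis halg : comm_algebra mul.

Local Notation h := (Defs.half F).
Local Notation eigsp := (eigsp mul).
Local Notation primitive_axis := (primitive_axis mul).

Lemma mulvC u v : mul u v = mul v u. Proof. exact: halg.1. Qed.

Fact mul_is_bilinear : bilinear_for *:%R *:%R mul.
Proof. by split=> [w c u v|z c u v]; rewrite ?halg.2 // !(mulvC z) halg.2. Qed.
HB.instance Definition _ :=
  bilinear_isBilinear.Build F V V V *:%R *:%R mul mul_is_bilinear.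
HB.instance Definition _ z :=
  GRing.isLinear.Build F V V *:%R (mul z) (mul_is_bilinear.2 z).

Lemma two_neq0 : 2%:R != 0 :> F.
Proof. by move/pcharf0P: charF => ->. Qed.

Lemma natr_inj : injective (fun k : nat => k%:R : F).
Proof.
have le_inj m k : (m <= k)%N -> m%:R = k%:R :> F -> m = k.
  move=> le_mk eq_mk; apply/eqP; rewrite eqn_leq le_mk /= -subn_eq0.
  by move/pcharf0P: charF => <-; rewrite natrB // eq_mk subrr.
move=> m k /= eq_mk; case: (leqP m k) => [|/ltnW] le.
  exact: le_inj.
exact/esym/le_inj.
Qed.

Lemma half_double : h + h = 1.
Proof. by rewrite /Defs.half; field; exact: two_neq0. Qed.

Lemma half_neq1 : h != 1.
Proof.
apply/eqP => h1; move: half_double; rewrite h1 => /eqP.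
by rewrite -subr_eq0 addrK oner_eq0.
Qed.

(* The spectral projections of [mul z] are polynomials in [mul z]:
   [x (2x - 1)], [(x - 1)(2x - 1)] and [4x (1 - x)] are the Lagrange
   interpolation polynomials of the points [1], [0] and [1/2]; their
   common multiple [x (x - 1)(2x - 1)] gives the defect [spec_defect]. *)
Definition pr_one z := 2%:R \*: (mul z \o mul z) \- mul z.
Definition pr_zero z := 2%:R \*: (mul z \o mul z) \- 3%:R \*: mul z \+ idfun.
Definition pr_half z := 4%:R \*: mul z \- 4%:R \*: (mul z \o mul z).
Definition spec_defect z :=
  2%:R \*: (mul z \o mul z \o mul z) \- 3%:R \*: (mul z \o mul z) \+ mul z.

HB.instance Definition _ z := GRing.Linear.on (pr_one z).
HB.instance Definition _ z := GRing.Linear.on (pr_zero z).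
HB.instance Definition _ z := GRing.Linear.on (pr_half z).
HB.instance Definition _ z := GRing.Linear.on (spec_defect z).

Lemma prE z u :
  [/\ pr_one z u = 2%:R *: mul z (mul z u) - mul z u,
      pr_zero z u = 2%:R *: mul z (mul z u) - 3%:R *: mul z u + u,
      pr_half z u = 4%:R *: mul z u - 4%:R *: mul z (mul z u)
    & spec_defect z u =
      2%:R *: mul z (mul z (mul z u)) - 3%:R *: mul z (mul z u) + mul z u].
Proof. by []. Qed.

Section PolynomialFamily.
Variables (c g : F -> V).
Hypotheses (c_poly : polynomial_map c) (g_poly : polynomial_map g).

Lemma polynomial_map_pr_one : polynomial_map (fun t => pr_one (c t) (g t)).
Proof. by rewrite /pr_one /=; do !polynomial_step. Qed.

Lemma polynomial_map_pr_zero : polynomial_map (fun t => pr_zero (c t) (g t)).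
Proof. by rewrite /pr_zero /=; do !polynomial_step. Qed.

Lemma polynomial_map_pr_half : polynomial_map (fun t => pr_half (c t) (g t)).
Proof. by rewrite /pr_half /=; do !polynomial_step. Qed.

Lemma polynomial_map_spec_defect :
  polynomial_map (fun t => spec_defect (c t) (g t)).
Proof. by rewrite /spec_defect /=; do !polynomial_step. Qed.

End PolynomialFamily.

Lemma pr_eigenvector z l w : mul z w = l *: w ->
  [/\ pr_one z w = (2%:R * l ^+ 2 - l) *: w,
      pr_zero z w = (2%:R * l ^+ 2 - 3%:R * l + 1) *: w,
      pr_half z w = (4%:R * l - 4%:R * l ^+ 2) *: w
    & spec_defect z w = (2%:R * l ^+ 3 - 3%:R * l ^+ 2 + l) *: w].
Proof.
move=> zw; have zzw : mul z (mul z w) = l ^+ 2 *: w by rewrite zw linearZ /= zw scalerA.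
have zzzw : mul z (mul z (mul z w)) = l ^+ 3 *: w.
  by rewrite zzw linearZ /= zw scalerA -exprSr.
by have [-> -> -> ->] := prE z w; rewrite zzzw zzw zw; split; lincomb [:: w].
Qed.

Ltac field_half := rewrite /Defs.half; field; exact: two_neq0.

Lemma pr_eig1 z w : eigsp z 1 w ->
  [/\ pr_one z w = w, pr_zero z w = 0, pr_half z w = 0 & spec_defect z w = 0].
Proof.
by case/pr_eigenvector=> -> -> -> ->; split; lincomb [:: w].
Qed.

Lemma pr_eig0 z w : eigsp z 0 w ->
  [/\ pr_one z w = 0, pr_zero z w = w, pr_half z w = 0 & spec_defect z w = 0].
Proof.
by case/pr_eigenvector=> -> -> -> ->; split; lincomb [:: w].
Qed.

Lemma pr_eigh z w : eigsp z h w ->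
  [/\ pr_one z w = 0, pr_zero z w = 0, pr_half z w = w & spec_defect z w = 0].
Proof.
by case/pr_eigenvector=> -> -> -> ->; split; lincomb [:: w] by field_half.
Qed.

Lemma eigspZ z l c w : eigsp z l w -> eigsp z l (c *: w).
Proof. by rewrite /eigsp linearZ /= => ->; rewrite !scalerA mulrC. Qed.

Lemma eigspB z l u w : eigsp z l u -> eigsp z l w -> eigsp z l (u - w).
Proof. by rewrite /eigsp linearB /= => -> ->; rewrite scalerBr. Qed.

Lemma eigsp1_idem c : mul c c = c -> eigsp c 1 c.
Proof. by rewrite /eigsp scale1r. Qed.

Lemma eigsp_direct z u1 u0 uh :
  eigsp z 1 u1 -> eigsp z 0 u0 -> eigsp z h uh ->
  u1 + u0 + uh = 0 -> [/\ u1 = 0, u0 = 0 & uh = 0].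
Proof.
move=> /pr_eig1[p11 p01 ph1 _] /pr_eig0[p10 p00 ph0 _] /pr_eigh[p1h p0h phh _] sum0.
split.
- by move/(congr1 (pr_one z)): sum0; rewrite !linearD /= p11 p10 p1h !addr0 linear0.
- move/(congr1 (pr_zero z)): sum0.
  by rewrite !linearD /= p01 p00 p0h add0r addr0 linear0.
- by move/(congr1 (pr_half z)): sum0; rewrite !linearD /= ph1 ph0 phh !add0r linear0.
Qed.

Lemma line_neq0 x m t : x != 0 -> mul x x = x -> eigsp x h m -> x + t *: m != 0.
Proof.
move=> x_neq0 xx xm; apply: contra_neq x_neq0 => /(congr1 (pr_one x)).
rewrite (linearD (pr_one x)) (linearZ_LR (pr_one x)) /= linear0.
case: (pr_eig1 (eigsp1_idem xx)) (pr_eigh xm) => -> _ _ _ [-> _ _ _].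
by rewrite scaler0 addr0.
Qed.

Lemma idem_line x m t : mul x x = x -> eigsp x h m -> mul m m = 0 ->
  mul (x + t *: m) (x + t *: m) = x + t *: m.
Proof.
move=> xx xm mm; rewrite linearDl /= !linearDr /= !linearZl_LR !linearZr_LR /=.
by rewrite xx xm (mulvC m) xm mm; lincomb [:: m; x] by field_half.
Qed.

Lemma spec_decomposition z : (forall v, spec_defect z v = 0) -> forall u,
  [/\ eigsp z 1 (pr_one z u), eigsp z 0 (pr_zero z u), eigsp z h (pr_half z u)
    & u = pr_one z u + pr_zero z u + pr_half z u].
Proof.
move=> defect0 u; have := defect0 u.
have [-> -> -> ->] := prE z u; rewrite /eigsp !linearD /= !linearN /= !linearZ /=.
set u1 := mul z u; set u2 := mul z u1; set u3 := mul z u2 => Qu.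
split; apply/eqP; rewrite -subr_eq0; apply/eqP.
- by rewrite -Qu; lincomb [:: u3; u2; u1; u].
- by rewrite -Qu; lincomb [:: u3; u2; u1; u].
- rewrite -[RHS](scaler0 _ (-2%:R)) -Qu; lincomb [:: u3; u2; u1; u] by field_half.
- by lincomb [:: u2; u1; u].
Qed.

Definition eigsp_plus z w :=
  exists w1 w0, [/\ eigsp z 1 w1, eigsp z 0 w0 & w = w1 + w0].

Lemma eigsp1_plus z w : eigsp z 1 w -> eigsp_plus z w.
Proof. by exists w, 0; rewrite addr0 /eigsp linear0 scaler0. Qed.

Lemma eigsp0_plus z w : eigsp z 0 w -> eigsp_plus z w.
Proof. by exists 0, w; rewrite add0r /eigsp linear0 scaler0. Qed.

Definition miyamoto z := idfun \- 2%:R \*: pr_half z.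
HB.instance Definition _ z := GRing.Linear.on (miyamoto z).

Lemma miyamotoE z u : miyamoto z u = u - 2%:R *: pr_half z u.
Proof. by []. Qed.

Lemma miyamoto_plus z w : eigsp_plus z w -> miyamoto z w = w.
Proof.
case=> w1 [w0 [/pr_eig1[_ _ ph1 _] /pr_eig0[_ _ ph0 _] ->]].
by rewrite miyamotoE (linearD (pr_half z)) /= ph1 ph0 addr0 scaler0 subr0.
Qed.

Lemma miyamoto_minus z w : eigsp z h w -> miyamoto z w = - w.
Proof. by rewrite miyamotoE => /pr_eigh[_ _ -> _]; lincomb [:: w]. Qed.

Section Axis.
Variable z : V.
Hypothesis axis_z : primitive_axis z.

Lemma axis_spec_defect u : spec_defect z u = 0.
Proof.
case: axis_z => _ _ /(_ u)[u1 [u0 [uh [E1 E0 Eh ->]]]] _ _.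
rewrite !(linearD (spec_defect z)) /=.
case: (pr_eig1 E1) (pr_eig0 E0) (pr_eigh Eh) => _ _ _ -> [_ _ _ ->] [_ _ _ ->].
by rewrite !addr0.
Qed.

Lemma axis_decomposition u :
  [/\ eigsp z 1 (pr_one z u), eigsp z 0 (pr_zero z u), eigsp z h (pr_half z u)
    & u = pr_one z u + pr_zero z u + pr_half z u].
Proof. exact: spec_decomposition axis_spec_defect u. Qed.

Lemma eigsp_plus_minus u :
  exists up um, [/\ eigsp_plus z up, eigsp z h um & u = up + um].
Proof.
have [E1 E0 Eh Eu] := axis_decomposition u.
exists (pr_one z u + pr_zero z u), (pr_half z u); split => //.
by exists (pr_one z u), (pr_zero z u).
Qed.

Lemma eigsp_plusM p q : eigsp_plus z p -> eigsp_plus z q -> eigsp_plus z (mul p q).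
Proof.
case: axis_z => _ _ _ _ fus [p1 [p0 [P1 P0 ->]]] [q1 [q0 [Q1 Q0 ->]]].
have [fus11 [fus10 [fus00 _]]] := fus p1 q1.
have [_ [fus10' _]] := fus q1 p0; have [_ [fus10'' _]] := fus p1 q0.
have [_ [_ [fus00' _]]] := fus p0 q0.
exists (mul p1 q1), (mul p0 q0); split; [exact: fus11 | exact: fus00' |].
by rewrite linearDl /= !linearDr /= fus10'' // (mulvC p0) fus10' // addr0 add0r.
Qed.

Lemma eigsp_plus_minusM p q : eigsp_plus z p -> eigsp z h q -> eigsp z h (mul p q).
Proof.
case: axis_z => _ _ _ _ fus [p1 [p0 [P1 P0 ->]]] Qh.
have [_ [_ [_ [fus1h _]]]] := fus p1 q; have [_ [_ [_ [_ [fus0h _]]]]] := fus p0 q.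
by rewrite /eigsp linearDl /= linearD /= fus1h // fus0h // scalerDr.
Qed.

Lemma eigsp_minusM p q : eigsp z h p -> eigsp z h q -> eigsp_plus z (mul p q).
Proof.
case: axis_z => _ _ _ _ fus Ph Qh.
by have [_ [_ [_ [_ [_ /(_ Ph Qh)[w1 [w0 [W1 W0 ->]]]]]]]] := fus p q; exists w1, w0.
Qed.

Lemma miyamotoM u v : miyamoto z (mul u v) = mul (miyamoto z u) (miyamoto z v).
Proof.
have [up [um [Up Um ->]]] := eigsp_plus_minus u.
have [vp [vm [Vp Vm ->]]] := eigsp_plus_minus v.
rewrite !(linearD (miyamoto z)) /= (miyamoto_plus Up) (miyamoto_plus Vp).
rewrite (miyamoto_minus Um) (miyamoto_minus Vm) !linearDl /= !linearDr /=.
rewrite !(linearD (miyamoto z)) /= (miyamoto_plus (eigsp_plusM Up Vp)).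
rewrite (miyamoto_minus (eigsp_plus_minusM Up Vm)) (mulvC um).
rewrite (miyamoto_minus (eigsp_plus_minusM Vp Um)) (miyamoto_plus (eigsp_minusM Um Vm)).
by rewrite linearNl linearNr /= linearNl linearNr opprK (mulvC vp).
Qed.

Lemma miyamotoK : involutive (miyamoto z).
Proof.
move=> u; have [up [um [Up Um ->]]] := eigsp_plus_minus u.
have -> : miyamoto z (up + um) = up - um.
  by rewrite (linearD (miyamoto z)) /= (miyamoto_plus Up) (miyamoto_minus Um).
by rewrite (linearB (miyamoto z)) /= (miyamoto_plus Up) (miyamoto_minus Um) opprK.
Qed.

End Axis.

Section Automorphism.
Variables (sg : {linear V -> V}) (rh : V -> V).
Hypotheses (sgM : forall u v, sg (mul u v) = mul (sg u) (sg v))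
  (sgK : cancel sg rh) (rhK : cancel rh sg).

Lemma eigsp_auto x l u : eigsp (sg x) l (sg u) <-> eigsp x l u.
Proof. by rewrite /eigsp -sgM -linearZ; split=> [/(can_inj sgK)|->]. Qed.

Lemma primitive_axis_auto x : primitive_axis x -> primitive_axis (sg x).
Proof.
have to_x l u : eigsp (sg x) l u -> eigsp x l (rh u).
  by rewrite -{1}[u]rhK => /eigsp_auto.
have to_sgx l u : eigsp x l u -> eigsp (sg x) l (sg u) by move/eigsp_auto.
case=> x_neq0 xx dec one fus; split.
- by rewrite -(linear0 sg) (can_eq sgK).
- by rewrite -sgM xx.
- move=> u; have [u1 [u0 [uh [U1 U0 Uh Eu]]]] := dec (rh u).
  exists (sg u1), (sg u0), (sg uh); split; try exact: to_sgx.
  by rewrite -!linearD -Eu rhK.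
- move=> u; split=> [/to_x/one[c Ec]|[c ->]].
    by exists c; rewrite -[u]rhK Ec linearZ.
  by rewrite -linearZ; apply/to_sgx/one; exists c.
- move=> u v; rewrite -[u]rhK -[v]rhK -sgM; move: (rh u) (rh v) => {}u {}v.
  have [f11 [f10 [f00 [f1h [f0h fhh]]]]] := fus u v.
  split; [|split; [|split; [|split; [|split]]]].
  + by move=> /eigsp_auto U /eigsp_auto W; apply/to_sgx/f11.
  + by move=> /eigsp_auto U /eigsp_auto W; rewrite f10 // linear0.
  + by move=> /eigsp_auto U /eigsp_auto W; apply/to_sgx/f00.
  + by move=> /eigsp_auto U /eigsp_auto W; apply/to_sgx/f1h.
  + by move=> /eigsp_auto U /eigsp_auto W; apply/to_sgx/f0h.
  + move=> /eigsp_auto U /eigsp_auto W; have [w1 [w0 [W1 W0 ->]]] := fhh U W.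
    by exists (sg w1), (sg w0); rewrite linearD; split; try exact: to_sgx.
Qed.

End Automorphism.

Section MultiplicationTable.
Variables a b0 n : V.
Hypotheses (aa : mul a a = a) (ab0 : eigsp a 0 b0) (an : eigsp a h n)
  (b0b0 : mul b0 b0 = b0) (b0n : mul b0 n = h *: n) (nn : mul n n = 0).

Definition span3 u := exists al be ga, u = al *: a + be *: b0 + ga *: n.

Lemma span3_mul al be ga al' be' ga' :
  mul (al *: a + be *: b0 + ga *: n) (al' *: a + be' *: b0 + ga' *: n) =
  (al * al') *: a + (be * be') *: b0
    + (h * (al * ga' + ga * al' + be * ga' + ga * be')) *: n.
Proof.
rewrite !linearDl /= !linearDr /= !linearZl_LR !linearZr_LR /=.
rewrite (mulvC b0 a) (mulvC n a) (mulvC n b0) aa ab0 an b0b0 b0n nn.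
by lincomb [:: a; b0; n].
Qed.

Lemma span3_subalgebra : subalgebra mul span3.
Proof.
split=> [|c u v|u v].
- by exists 0, 0, 0; rewrite !scale0r !addr0.
- case=> [al [be [ga ->]]] [al' [be' [ga' ->]]].
  exists (c * al + al'), (c * be + be'), (c * ga + ga').
  by lincomb [:: a; b0; n].
- case=> [al [be [ga ->]]] [al' [be' [ga' ->]]].
  by rewrite span3_mul; do 3 eexists.
Qed.

Lemma span3_unit u : span3 u -> mul (a + b0) u = u.
Proof.
case=> al [be [ga ->]].
have -> : a + b0 = 1 *: a + 1 *: b0 + 0 *: n by lincomb [:: a; b0; n].
by rewrite span3_mul; lincomb [:: a; b0; n] by field_half.
Qed.

Lemma span3_idem c : a != 0 -> b0 != 0 -> span3 c -> mul c c = c ->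
  [\/ c = 0, c = a + b0, exists t, c = a + t *: n | exists t, c = b0 + t *: n].
Proof.
move=> a_neq0 b0_neq0 [al [be [ga ->]]]; rewrite span3_mul => /eqP.
rewrite -subr_eq0 => /eqP cc0.
have coefs0 : (al * al - al) *: a + (be * be - be) *: b0
    + (h * (al * ga + ga * al + be * ga + ga * be) - ga) *: n = 0.
  by rewrite -cc0; lincomb [:: a; b0; n].
have [Ea Eb0 En] :=
  eigsp_direct (eigspZ _ (eigsp1_idem aa)) (eigspZ _ ab0) (eigspZ _ an) coefs0.
have coef01 (r : F) (v : V) : v != 0 -> (r * r - r) *: v = 0 -> r = 0 \/ r = 1.
  move=> v_neq0 /eqP; rewrite scaler_eq0 (negbTE v_neq0) orbF.
  have -> : r * r - r = r * (r - 1) by ring.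
  rewrite mulf_eq0 subr_eq0.
  by case/orP=> /eqP; [left|right].
case: (coef01 _ _ a_neq0 Ea) (coef01 _ _ b0_neq0 Eb0) En => -> [] -> En.
- have {}En : - ga *: n = 0 by rewrite -En; congr (_ *: _); ring.
  constructor 1; move/eqP: En; rewrite scaleNr oppr_eq0 => /eqP ->.
  by lincomb [:: a; b0].
- by constructor 4; exists ga; lincomb [:: a; b0; n].
- by constructor 3; exists ga; lincomb [:: a; b0; n].
- have {}En : ga *: n = 0 by rewrite -En; congr (_ *: _); field_half.
  by constructor 2; rewrite En; lincomb [:: a; b0].
Qed.

End MultiplicationTable.

Section Frobenius.
Variable f : V -> V -> F.
Hypothesis hf : frobenius_form mul f.

Fact frobenius_is_bilinear : bilinear_for *%R *%R f.
Proof. by case: hf => fl fr _ _; split=> [w c u v|z c u v]; rewrite ?fl ?fr. Qed.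
HB.instance Definition _ :=
  bilinear_isBilinear.Build F V V F *%R *%R f frobenius_is_bilinear.

Lemma frobeniusA u v w : f (mul u v) w = f u (mul v w). Proof. by case: hf. Qed.

Lemma frobenius_axis x : primitive_axis x -> f x x = 1.
Proof. by case: hf => _ _ _; apply. Qed.

Lemma frobenius_idem_eigsp c l w : mul c c = c -> eigsp c l w -> l != 1 ->
  f c w = 0 /\ f w c = 0.
Proof.
move=> cc cw l_neq1.
have fixed0 (a : F) : a = l * a -> a = 0.
  move=> a_fix; have /eqP : (1 - l) * a = 0 by rewrite mulrBl mul1r -a_fix subrr.
  by rewrite mulf_eq0 subr_eq0 eq_sym (negbTE l_neq1) => /eqP.
split; apply: fixed0.
- by rewrite -{1}cc frobeniusA cw linearZr_LR.
- by rewrite -{1}cc -frobeniusA mulvC cw linearZl_LR.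
Qed.

Lemma axis_pr_one c u : primitive_axis c -> pr_one c u = f c u *: c.
Proof.
move=> axis_c; have [_ cc _ one _] := axis_c.
have [] := axis_decomposition axis_c u.
move: (pr_one c u) (pr_zero c u) (pr_half c u) => u1 u0 uh E1 E0 Eh ->.
have zero_neq1 : 0 != 1 :> F by rewrite eq_sym oner_eq0.
have [f0 _] := frobenius_idem_eigsp cc E0 zero_neq1.
have [fh _] := frobenius_idem_eigsp cc Eh half_neq1.
have [mu ->] := (one _).1 E1.
by rewrite !linearDr /= f0 fh !addr0 linearZr_LR /= frobenius_axis // mulr1.
Qed.

(* The conditions for [c] to be a primitive axis, besides [c] being a nonzero
   idempotent, as a list of vectors that must vanish; each entry depends
   polynomially on [c]. *)
Definition axis_defects c u v : seq V :=
  [:: spec_defect c u; pr_one c u - f c u *: c;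
      mul c (mul (pr_zero c u) (pr_zero c v));
      mul c (mul (pr_zero c u) (pr_half c v)) - h *: mul (pr_zero c u) (pr_half c v);
      pr_half c (mul (pr_half c u) (pr_half c v))].

Definition axis_identities c := forall u v i, (axis_defects c u v)`_i = 0.

Lemma axis_identitiesP c : primitive_axis c -> axis_identities c.
Proof.
move=> axis_c u v; have [_ _ _ _ fus] := axis_c.
have [U1 U0 Uh _] := axis_decomposition axis_c u.
have [V1 V0 Vh _] := axis_decomposition axis_c v.
case=> [|[|[|[|[|i]]]]] /=.
- exact: axis_spec_defect.
- by rewrite axis_pr_one // subrr.
- have [_ [_ [/(_ U0 V0) -> _]]] := fus (pr_zero c u) (pr_zero c v).
  by rewrite scale0r.
- have [_ [_ [_ [_ [/(_ U0 Vh) -> _]]]]] := fus (pr_zero c u) (pr_half c v).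
  by rewrite subrr.
- have [_ [_ [_ [_ [_ /(_ Uh Vh)[w1 [w0 [W1 W0 ->]]]]]]]] :=
    fus (pr_half c u) (pr_half c v).
  case: (pr_eig1 W1) (pr_eig0 W0) => _ _ ph1 _ [_ _ ph0 _].
  by rewrite linearD /= ph1 ph0 addr0.
- by rewrite nth_nil.
Qed.

Lemma primitive_axis_identities c :
  c != 0 -> mul c c = c -> axis_identities c -> primitive_axis c.
Proof.
move=> c_neq0 cc ids.
have dec := spec_decomposition (fun w => ids w w 0%N).
have one u : eigsp c 1 u <-> exists mu, u = mu *: c.
  split=> [/pr_eig1[p1u _ _ _]|[mu ->]]; last by rewrite /eigsp linearZ /= cc scale1r.
  exists (f c u); apply/eqP; rewrite -subr_eq0.
  by have := ids u u 1%N; rewrite /= p1u => ->.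
split=> // [u|u v].
  have [E1 E0 Eh Eu] := dec u.
  by exists (pr_one c u), (pr_zero c u), (pr_half c u).
split; [|split; [|split; [|split; [|split]]]].
- move=> /one[mu ->] /one[nu ->]; apply/one; exists (mu * nu).
  by rewrite linearZl_LR linearZr_LR /= cc scalerA.
- by move=> /one[mu ->] c0v; rewrite linearZl_LR /= c0v scale0r scaler0.
- move=> /pr_eig0[_ p0u _ _] /pr_eig0[_ p0v _ _]; rewrite /eigsp scale0r.
  by have := ids u v 2%N; rewrite /= p0u p0v.
- move=> /one[mu ->] chv; rewrite /eigsp linearZl_LR /= chv !linearZ /= chv.
  by lincomb [:: v].
- move=> /pr_eig0[_ p0u _ _] /pr_eigh[_ _ phv _]; apply/eqP; rewrite -subr_eq0.
  by have := ids u v 3%N; rewrite /= p0u phv => ->.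
- move=> /pr_eigh[_ _ phu _] /pr_eigh[_ _ phv _]; have [E1 E0 _ ->] := dec (mul u v).
  have := ids u v 4%N; rewrite /= phu phv => ->.
  by exists (pr_one c (mul u v)), (pr_zero c (mul u v)); rewrite addr0.
Qed.

Lemma axis_defects_line x n u v i :
  polynomial_map (fun t => (axis_defects (x + t *: n) u v)`_i).
Proof.
pose c t := x + t *: n.
have defect1 : polynomial_map (fun t => pr_one (c t) u - f (c t) u *: c t).
  apply: (eq_polynomial_map (g1 := fun t =>
    pr_one (c t) u - (f x u *: c t + t *: (f n u *: c t)))).
    by move=> t; rewrite linearDl /= linearZl_LR /= scalerDl scalerA.
  by do ![apply: polynomial_map_pr_one | polynomial_step].
case: i => [|[|[|[|[|i]]]]] //=; do ![ apply: polynomial_map_pr_zero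
  | apply: polynomial_map_pr_half | apply: polynomial_map_spec_defect
  | polynomial_step ].
Qed.

Lemma orth_axis_eigsp x y : primitive_axis x -> f x y = 0 ->
  eigsp x 0 (y - 2%:R *: mul x y) /\ eigsp x h (2%:R *: mul x y).
Proof.
move=> axis_x xy0; have [_ E0 Eh] := axis_decomposition axis_x y.
rewrite axis_pr_one // xy0 scale0r add0r.
move: (pr_zero x y) (pr_half x y) E0 Eh => y0 yh E0 Eh ->.
have -> : 2%:R *: mul x (y0 + yh) = yh.
  by rewrite linearD /= E0 Eh scale0r add0r scalerA; lincomb [:: yh] by field_half.
by rewrite addrK.
Qed.

Lemma orth_axis_sym x y : primitive_axis x -> f x y = 0 -> f y x = 0.
Proof.
move=> axis_x xy0; have [E0 Eh] := orth_axis_eigsp axis_x xy0.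
have [_ xx _ _ _] := axis_x; have zero_neq1 : 0 != 1 :> F by rewrite eq_sym oner_eq0.
rewrite -(subrK (2%:R *: mul x y) y) linearDl /=.
have [_ ->] := frobenius_idem_eigsp xx E0 zero_neq1.
by have [_ ->] := frobenius_idem_eigsp xx Eh half_neq1; rewrite addr0.
Qed.

Section OrthogonalAxes.
Variables x y : V.
Hypotheses (axis_x : primitive_axis x) (axis_y : primitive_axis y) (xy0 : f x y = 0).
Local Notation n := (2%:R *: mul x y).

Lemma orth_axes_eigsp_r : eigsp y 0 (x - n) /\ eigsp y h n.
Proof.
by rewrite (mulvC x); exact: orth_axis_eigsp axis_y (orth_axis_sym axis_x xy0).
Qed.

Lemma orth_axes_sqr : mul n n = 0.
Proof.
have [E0 Eh] := orth_axis_eigsp axis_x xy0; have [_ yn] := orth_axes_eigsp_r.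
have [_ _ _ _ fus] := axis_x.
have [_ [_ [_ [_ [/(_ E0 Eh) E0h _]]]]] := fus (y - n) n.
have [_ [_ [_ [_ [_ /(_ Eh Eh)[w1 [w0 [W1 W0 nnE]]]]]]]] := fus n n.
have Enn : eigsp x h (- mul n n).
  have -> : - mul n n = mul (y - n) n - h *: n.
    by rewrite -yn linearBl /= addrAC subrr add0r.
  exact: eigspB E0h (eigspZ h Eh).
have sum0 : w1 + w0 + - mul n n = 0 by rewrite nnE subrr.
have [w1_0 w0_0 _] := eigsp_direct W1 W0 Enn sum0.
by rewrite nnE w1_0 w0_0 addr0.
Qed.

Lemma orth_axes_mul_r : mul (y - n) n = h *: n.
Proof.
by have [_ yn] := orth_axes_eigsp_r; rewrite linearBl /= yn orth_axes_sqr subr0.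
Qed.

Lemma orth_axes_idem : mul (y - n) (y - n) = y - n.
Proof.
have [_ yy _ _ _] := axis_y; have [_ yn] := orth_axes_eigsp_r.
rewrite linearBr /= orth_axes_mul_r linearBl /= yy (mulvC n y) yn.
by lincomb [:: mul x y; y] by field_half.
Qed.

Lemma orth_axes_axis_even k : primitive_axis (x + (k.*2)%:R *: n).
Proof.
have [_ xx _ _ _] := axis_x; have [_ Exn] := orth_axis_eigsp axis_x xy0.
have [Ey0 Eyn] := orth_axes_eigsp_r.
have shift s : (miyamoto x \o miyamoto y) (x + s *: n) = x + (s + 2%:R) *: n.
  have -> : x + s *: n = (x - n) + (s + 1) *: n by lincomb [:: mul x y; x].
  rewrite /= (linearD (miyamoto y)) (linearZ_LR (miyamoto y)) /=.
  rewrite (miyamoto_plus (eigsp0_plus Ey0)) (miyamoto_minus Eyn).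
  have -> : x - n + (s + 1) *: - n = x - (s + 2%:R) *: n.
    by lincomb [:: mul x y; x].
  rewrite (linearB (miyamoto x)) (linearZ_LR (miyamoto x)) /=.
  rewrite (miyamoto_plus (eigsp1_plus (eigsp1_idem xx))) (miyamoto_minus Exn).
  by lincomb [:: mul x y; x].
elim: k => [|k IHk]; first by rewrite scale0r addr0.
rewrite doubleS -addn2 natrD -shift.
apply: (primitive_axis_auto (rh := miyamoto y \o miyamoto x)) IHk => [u v|u|u] /=.
- by rewrite !miyamotoM.
- by rewrite (miyamotoK axis_x) (miyamotoK axis_y).
- by rewrite (miyamotoK axis_y) (miyamotoK axis_x).
Qed.

Lemma orth_axes_axis t : primitive_axis (x + t *: n).
Proof.
have [x_neq0 xx _ _ _] := axis_x; have [_ Exn] := orth_axis_eigsp axis_x xy0.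
apply: primitive_axis_identities.
- exact: line_neq0.
- exact: idem_line orth_axes_sqr.
- move=> u v i; have pt_inj : injective (fun k => (k.*2)%:R : F).
    by move=> j k /natr_inj/double_inj.
  apply: (polynomial_map_eq0 pt_inj (axis_defects_line x n u v i)) => k.
  exact: axis_identitiesP (orth_axes_axis_even k) u v i.
Qed.

End OrthogonalAxes.

End Frobenius.

End JordanTypeHalf.

Theorem proposition6p7 (F : fieldType) (hF : [pchar F] =i pred0)
  (V : lmodType F) (mul : V -> V -> V)
  (hA : jordan_type_half_algebra mul)
  (f : V -> V -> F) (hf : frobenius_form mul f)
  (a b : V) (ha : primitive_axis mul a) (hb : primitive_axis mul b)
  (hab : f a b = 0) :
  solid mul a b.
Proof.
case: hA => halg _ c Jc cc c_neq0 c_not_unit.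
have [a_neq0 aa _ _ _] := ha; have [b_neq0 bb _ _ _] := hb.
have [Eb0 En] := orth_axis_eigsp hF halg hf ha hab.
have nn := orth_axes_sqr hF halg hf ha hb hab.
have b0n := orth_axes_mul_r hF halg hf ha hb hab.
have b0b0 := orth_axes_idem hF halg hf ha hb hab.
set n := 2%:R *: mul a b in Eb0 En nn b0n b0b0.
have b0_neq0 : b - n != 0.
  apply: contra_neq b_neq0 => /eqP; rewrite subr_eq0 => /eqP bn.
  by rewrite -bb bn nn.
have J_span u : gen2 mul a b u -> span3 a (b - n) n u.
  apply; first exact: span3_subalgebra.
  by move=> _ [->|->]; [exists 1, 0, 0 | exists 0, 1, 1]; lincomb [:: a; b; n].
case: (span3_idem hF halg aa Eb0 En b0b0 b0n nn a_neq0 b0_neq0 (J_span c Jc) cc).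
- by move=> c0; rewrite c0 eqxx in c_neq0.
- move=> c_unit; case: c_not_unit; split=> // u /J_span; rewrite c_unit.
  exact: span3_unit.
- by case=> t ->; apply: (orth_axes_axis hF halg hf ha hb hab).
- case=> t ->; rewrite (_ : b - n + t *: n = b + (t - 1) *: (2%:R *: mul b a)).
    exact: (orth_axes_axis hF halg hf hb ha (orth_axis_sym hF halg hf ha hab)).
  by rewrite /n (mulvC halg b); lincomb [:: mul a b; b].
Qed.
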